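(* Let $(u_n)_{n\in\mathbb Z}$ be a 4-chain and $i\in\mathbb Z$. If $1<|u_i|<|u_{i+1}|$, then $|u_{i+2}|>|u_{i+1}|$. If $|u_i|>|u_{i+1}|>1$, then $|u_{i-1}|>|u_i|$. Consequently, if a 4-chain has no term of absolute value $1$ (and no two consecutive terms of equal absolute value), it has a unique term $u_0$ of least absolute value (after reindexing), and $\cdots>|u_{-2}|>|u_{-1}|>|u_0|<|u_1|<|u_2|<\cdots$.
   Context: A 4-chain is a bi-infinite sequence of integers $(u_n)_{n\in\mathbb Z}$ satisfying $u_{n-1}u_{n+1}=u_n^3+u_n^{f(n)}+1$ for all $n\in\mathbb Z$, where $f(n)=1$ if $n\equiv 0,3\pmod 4$ and $f(n)=2$ if $n\equiv 1,2\pmod 4$. *)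

From Stdlib Require Import ZArith Lia.
Open Scope Z_scope.

Definition f4 (n : Z) : Z :=
  let r := n mod 4 in
  if orb (r =? 0) (r =? 3) then 1 else 2.

Definition is_4chain (u : Z -> Z) : Prop :=
  forall n : Z, u (n - 1) * u (n + 1) = u n ^ 3 + u n ^ (f4 n) + 1.

(* If 1 < |u_i| < |u_(i+1)| = B, the recurrence gives |u_i| |u_(i+2)| >= B^3 - B^2 - 1 while
   |u_i| <= B - 1, which forces |u_(i+2)| > B; reading the recurrence backwards gives the mirror
   statement.  When no term has absolute value 1 no term is 0 either (u_n = 0 would make
   u_(n-1) u_(n+1) = 1), so all |u_n| >= 2 and the growth propagates in both directions away from
   a term of least absolute value, which then is the unique valley of |u|. *)
From Stdlib Require Import ZArith Lia Classical.
Open Scope Z_scope.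

Lemma f4_cases (n : Z) : f4 n = 1 \/ f4 n = 2.
Proof. unfold f4; destruct (_ || _)%bool; auto. Qed.

Lemma abs_cubic_lower (b e : Z) : e = 1 \/ e = 2 ->
  Z.abs b ^ 3 - Z.abs b ^ 2 - 1 <= Z.abs (b ^ 3 + b ^ e + 1).
Proof.
  intros He.
  assert (Hbe : Z.abs (b ^ e) <= Z.abs b ^ 2).
  { rewrite Z.abs_pow; destruct He as [-> | ->]; nia. }
  assert (Hsplit : b ^ 3 = (b ^ 3 + b ^ e + 1) - b ^ e - 1) by ring.
  rewrite <- Z.abs_pow; lia.
Qed.

Lemma abs_gt_of_mul_cubic (a b c e : Z) : e = 1 \/ e = 2 ->
  a * c = b ^ 3 + b ^ e + 1 -> 1 < Z.abs a < Z.abs b -> Z.abs b < Z.abs c.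
Proof.
  intros He Hrec Hab.
  pose proof (abs_cubic_lower b e He) as Hlow.
  rewrite <- Hrec, Z.abs_mul in Hlow.
  nia.
Qed.

Section FourChain.

Variable u : Z -> Z.
Hypothesis hu : is_4chain u.

Lemma chain_abs_grows_forward (i : Z) :
  1 < Z.abs (u i) < Z.abs (u (i + 1)) -> Z.abs (u (i + 1)) < Z.abs (u (i + 2)).
Proof.
  intros Hi; pose proof (hu (i + 1)) as Hrec.
  replace (i + 1 - 1) with i in Hrec by ring.
  replace (i + 1 + 1) with (i + 2) in Hrec by ring.
  exact (abs_gt_of_mul_cubic _ _ _ _ (f4_cases _) Hrec Hi).
Qed.

Lemma chain_abs_grows_backward (i : Z) :
  1 < Z.abs (u (i + 1)) < Z.abs (u i) -> Z.abs (u i) < Z.abs (u (i - 1)).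
Proof.
  intros Hi; pose proof (hu i) as Hrec; rewrite Z.mul_comm in Hrec.
  exact (abs_gt_of_mul_cubic _ _ _ _ (f4_cases _) Hrec Hi).
Qed.

Lemma chain_abs_ge2 : (forall n, Z.abs (u n) <> 1) -> forall n, 2 <= Z.abs (u n).
Proof.
  intros Hno1 n.
  destruct (Z.eq_dec (u n) 0) as [Hz | Hnz]; [|specialize (Hno1 n); lia].
  exfalso; apply (Hno1 (n + 1)).
  pose proof (hu n) as Hrec.
  rewrite Hz, Z.mul_comm in Hrec.
  assert (Hunit : u (n + 1) * u (n - 1) = 1)
    by (destruct (f4_cases n) as [F | F]; rewrite F in Hrec; exact Hrec).
  destruct (Z.eq_mul_1 _ _ Hunit) as [-> | ->]; reflexivity.
Qed.

End FourChain.

Lemma exists_min_nonneg (g : Z -> Z) :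
  (forall n, 0 <= g n) -> exists m, forall n, g m <= g n.
Proof.
  intros Hg.
  enough (Hval : forall k, 0 <= k -> forall n, g n = k -> exists m, forall n', g m <= g n')
    by exact (Hval (g 0) (Hg 0) 0 eq_refl).
  intros k Hk; pattern k; apply Zlt_0_ind; [|exact Hk].
  intros x IH _ n Hn.
  destruct (classic (exists n', g n' < x)) as [[n' Hn'] | Hno].
  - exact (IH (g n') ltac:(specialize (Hg n'); lia) n' eq_refl).
  - exists n; intros n'.
    destruct (Z_lt_le_dec (g n') (g n)); [exfalso; apply Hno; exists n'; lia | lia].
Qed.

Lemma increasing_from_min (g : Z -> Z) (m : Z) :
  (forall n, g m <= g n) -> (forall n, g n <> g (n + 1)) ->
  (forall i, g i < g (i + 1) -> g (i + 1) < g (i + 2)) ->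
  forall n, m <= n -> g n < g (n + 1).
Proof.
  intros g_min g_neq g_fwd n Hn.
  replace n with (m + (n - m)) by ring.
  apply (natlike_ind (fun k => g (m + k) < g (m + k + 1))); [| |lia].
  - rewrite Z.add_0_r; specialize (g_min (m + 1)); specialize (g_neq m); lia.
  - intros k _ IH.
    replace (m + Z.succ k) with (m + k + 1) by ring.
    replace (m + k + 1 + 1) with (m + k + 2) by ring.
    exact (g_fwd _ IH).
Qed.

Section Valley.

Variables (g : Z -> Z) (m : Z).
Hypothesis g_min : forall n, g m <= g n.
Hypothesis g_neq : forall n, g n <> g (n + 1).

Lemma decreasing_to_min :
  (forall i, g (i + 1) < g i -> g i < g (i - 1)) ->
  forall n, n < m -> g (n + 1) < g n.
Proof.
  intros g_bwd n Hn.
  (* The backward hypothesis is the forward one for the reflected sequence k |-> g (-k). *)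
  set (h := fun k => g (- k)).
  assert (Hinc : forall k, - m <= k -> h k < h (k + 1)).
  { apply (increasing_from_min h (- m)).
    - intros k; unfold h; rewrite Z.opp_involutive; apply g_min.
    - intros k; unfold h; replace (- k) with (- (k + 1) + 1) by ring; auto.
    - intros i Hi; unfold h in *.
      replace (- (i + 2)) with (- (i + 1) - 1) by ring.
      replace (- i) with (- (i + 1) + 1) in Hi by ring.
      exact (g_bwd _ Hi). }
  specialize (Hinc (- n - 1) ltac:(lia)); unfold h in Hinc.
  replace (- (- n - 1)) with (n + 1) in Hinc by ring.
  replace (- (- n - 1 + 1)) with n in Hinc by ring.
  exact Hinc.
Qed.

Lemma strict_min_of_valley :
  (forall n, n < m -> g (n + 1) < g n) ->
  (forall n, m <= n -> g n < g (n + 1)) ->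
  forall n, n <> m -> g m < g n.
Proof.
  intros Hdec Hinc n Hn.
  destruct (Z_lt_le_dec n m) as [Hlt | Hle].
  - specialize (Hdec n Hlt); specialize (g_min (n + 1)); lia.
  - specialize (Hinc (n - 1) ltac:(lia)); specialize (g_min (n - 1)).
    replace (n - 1 + 1) with n in Hinc by ring; lia.
Qed.

End Valley.

Theorem mainTheorem9 (u : Z -> Z) (hu : is_4chain u) :
  (forall i : Z, 1 < Z.abs (u i) < Z.abs (u (i + 1)) ->
     Z.abs (u (i + 2)) > Z.abs (u (i + 1))) /\
  (forall i : Z, Z.abs (u i) > Z.abs (u (i + 1)) /\ Z.abs (u (i + 1)) > 1 ->
     Z.abs (u (i - 1)) > Z.abs (u i)) /\
  ((forall n : Z, Z.abs (u n) <> 1) ->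
   (forall n : Z, Z.abs (u n) <> Z.abs (u (n + 1))) ->
   exists m : Z,
     (forall n : Z, n <> m -> Z.abs (u m) < Z.abs (u n)) /\
     (forall n : Z, n < m -> Z.abs (u n) > Z.abs (u (n + 1))) /\
     (forall n : Z, m <= n -> Z.abs (u (n + 1)) > Z.abs (u n))).
Proof.
  split; [intros i Hi; apply Z.lt_gt, chain_abs_grows_forward; auto|].
  split; [intros i Hi; apply Z.lt_gt, chain_abs_grows_backward; auto; lia|].
  intros Hno1 Hneq.
  pose proof (chain_abs_ge2 u hu Hno1) as Hge2.
  set (g := fun n => Z.abs (u n)).
  destruct (exists_min_nonneg g (fun n => Z.abs_nonneg (u n))) as [m Hmin].
  assert (Hinc : forall n, m <= n -> g n < g (n + 1)).
  { apply increasing_from_min; auto.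
    intros i Hi; apply chain_abs_grows_forward; auto.
    specialize (Hge2 i); unfold g in *; lia. }
  assert (Hdec : forall n, n < m -> g (n + 1) < g n).
  { apply decreasing_to_min; auto.
    intros i Hi; apply chain_abs_grows_backward; auto.
    specialize (Hge2 (i + 1)); unfold g in *; lia. }
  exists m; split; [exact (strict_min_of_valley g m Hmin Hdec Hinc)|].
  split; intros n Hn; apply Z.lt_gt; [apply Hdec | apply Hinc]; exact Hn.
Qed.
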